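(* Let $q=p^e$ with $p>3$ prime and $e\ge1$, and let $n\ge 1$ be an integer. If $D_{n,3}(1,x)$ is a permutation polynomial of $\mathbb{F}_q$, then $n\equiv 2\pmod 6$.
   Context: For $n\ge 1$ and $a\in\mathbb{F}_q$, $D_{n,3}(a,x)=\sum_{i=0}^{\lfloor n/2\rfloor}\frac{n-3i}{n-i}\binom{n-i}{i}(-x)^i a^{n-2i}\in\mathbb{F}_q[x]$, where each coefficient $\frac{n-3i}{n-i}\binom{n-i}{i}$ is an integer read modulo $p$; and $D_{0,3}(a,x)=-1$. A polynomial $g\in\mathbb{F}_q[x]$ is a permutation polynomial of $\mathbb{F}_q$ if $c\mapsto g(c)$ is a bijection $\mathbb{F}_q\to\mathbb{F}_q$. *)

From HB Require Import structures.
From mathcomp Require Import all_boot all_order all_algebra all_field.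
Set Implicit Arguments. Unset Strict Implicit. Unset Printing Implicit Defensive.
Import GRing.Theory.
Local Open Scope ring_scope.

(* The integer coefficient ((n - 3i)/(n - i)) * C(n-i, i), computed literally
   as the exact integer quotient ((n - 3i) * C(n-i,i)) / (n - i). *)
Definition dickson3_coef (n i : nat) : int :=
  ((((n%:Z - 3 * i%:Z) * ('C(n - i, i))%:Z)) %/ ((n - i)%N)%:Z)%Z.

Definition dickson3 (F : ringType) (n : nat) (a : F) : {poly F} :=
  if n is 0 then -1 else
  \sum_(i < n./2.+1) ((dickson3_coef n i)%:~R * a ^+ (n - 2 * i)) *: (- 'X) ^+ i.

Definition is_perm_poly (F : finFieldType) (g : {poly F}) : Prop :=
  bijective (fun c : F => g.[c]).

(* Write t = -c.  Evaluating D_{n,3}(1, c) gives E_n(t) - 2t E_{n-2}(t), where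
   E_n(t) = sum_i C(n-i, i) t^i satisfies E_{n+2} = E_{n+1} + t E_n.  At t = 0, 2, -1
   this recurrence is solved in closed form: E_n(0) = 1, 3 E_n(2) = 2^(n+1) + (-1)^n,
   and E_n(-1) has period 6.  Hence D_{n,3}(1, 0) = 1 and D_{n,3}(1, -2) = (-1)^(n-1),
   which collide for n odd, while for n even with n mod 6 in {0, 4} also
   D_{n,3}(1, 1) = -1 = D_{n,3}(1, -2).  Since 2 and 3 are nonzero in F, any such
   collision contradicts injectivity. *)

From HB Require Import structures.
From mathcomp Require Import all_boot all_order all_algebra all_field.
From mathcomp Require Import zify ring.
Set Implicit Arguments. Unset Strict Implicit. Unset Printing Implicit Defensive.
Import GRing.Theory.
Local Open Scope ring_scope.

Lemma sum_nat_zero_tail (R : nmodType) (f : nat -> R) a k :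
  (forall i, (a <= i)%N -> f i = 0) -> (a <= k)%N ->
  \sum_(0 <= i < k) f i = \sum_(0 <= i < a) f i.
Proof.
move=> f0; elim: k => [|k IHk]; first by rewrite leqn0 => /eqP ->.
rewrite leq_eqVlt => /orP[/eqP <- //|lt_ak].
by rewrite big_nat_recr //= IHk // f0 // addr0.
Qed.

(* [dickson_e t n] is E_n(1, -t), the Dickson polynomial of the second kind. *)
Definition dickson_e (R : comPzRingType) (t : R) (n : nat) : R :=
  \sum_(0 <= i < n.+1) 'C(n - i, i)%:R * t ^+ i.

Section DicksonE.

Variable R : comPzRingType.
Implicit Types (t : R) (n : nat).

Lemma dickson_e_sum t n N : (n./2 < N)%N ->
  \sum_(0 <= i < N) 'C(n - i, i)%:R * t ^+ i = dickson_e t n.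
Proof.
have bin0_tail i : (n./2.+1 <= i)%N -> 'C(n - i, i)%:R * t ^+ i = 0.
  by rewrite ltn_half_double => lt_ni; rewrite bin_small ?mul0r //; lia.
move=> lt_nN; rewrite /dickson_e (sum_nat_zero_tail bin0_tail) //.
by rewrite [RHS](sum_nat_zero_tail bin0_tail) // ltnS leq_half_double; lia.
Qed.

Lemma dickson_e0 t : dickson_e t 0 = 1.
Proof. by rewrite /dickson_e big_nat1 bin0 mul1r expr0. Qed.

Lemma dickson_e1 t : dickson_e t 1 = 1.
Proof. by rewrite -(dickson_e_sum t (N := 1)) // big_nat1 bin0 mul1r expr0. Qed.

Lemma dickson_eSS t n : dickson_e t n.+2 = dickson_e t n.+1 + t * dickson_e t n.
Proof.
have pascal i : 'C(n.+1 - i, i.+1) = ('C(n - i, i.+1) + 'C(n - i, i))%N.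
  case: (leqP i n) => [le_in|lt_ni]; first by rewrite subSn // binS.
  by rewrite !bin_small //; lia.
rewrite -(@dickson_e_sum t n.+1 n.+3); last by rewrite ltnS leq_half_double; lia.
rewrite -(@dickson_e_sum t n n.+2); last by rewrite ltnS leq_half_double; lia.
rewrite /dickson_e (big_nat_recl n.+2) // (big_nat_recl n.+2) // !subn0 !bin0 mul1r.
rewrite mulr_sumr -addrA -big_split /=; congr (_ + _).
by apply: eq_big_nat => i _; rewrite !subSS pascal natrD !exprS; ring.
Qed.

Lemma dickson_e_at0 n : dickson_e (0 : R) n = 1.
Proof.
elim: n => [|[|n] IHn]; rewrite ?dickson_e0 ?dickson_e1 //.
by rewrite dickson_eSS IHn mul0r addr0.
Qed.

Lemma dickson_e_at2 n : 3 * dickson_e (2 : R) n = 2 ^+ n.+1 + (-1) ^+ n.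
Proof.
elim/ltn_ind: n => -[|[|n]] IHn.
- by rewrite dickson_e0; ring.
- by rewrite dickson_e1; ring.
rewrite dickson_eSS mulrDr mulrCA IHn // IHn // !exprS; ring.
Qed.

Lemma dickson_e_atN1S3 n : dickson_e (-1 : R) n.+3 = - dickson_e (-1) n.
Proof. by rewrite !dickson_eSS; ring. Qed.

Lemma dickson_e_atN1_mod6 n : dickson_e (-1 : R) n = dickson_e (-1) (n %% 6).
Proof.
rewrite {1}(divn_eq n 6); elim: (n %/ 6)%N => [|q IHq]; first by rewrite mul0n add0n.
have -> : (q.+1 * 6 + n %% 6 = (q * 6 + n %% 6).+3.+3)%N by lia.
by rewrite !dickson_e_atN1S3 opprK.
Qed.

End DicksonE.

Lemma dickson3_coef0 n : (0 < n)%N -> dickson3_coef n 0 = 1.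
Proof.
move=> n_gt0; rewrite /dickson3_coef subn0 bin0 mulr0 subr0 mulr1 divzz.
by case: n n_gt0.
Qed.

Lemma dickson3_coefS n i : ((i.+1).*2 <= n)%N ->
  dickson3_coef n i.+1 = 'C(n - i.+1, i.+1)%:Z - 2 * 'C(n - i.+2, i)%:Z.
Proof.
move=> le_in; rewrite /dickson3_coef.
have nz : ((n - i.+1)%N)%:Z != 0 by apply/eqP; lia.
rewrite -[RHS](mulzK _ nz); congr (_ %/ _)%Z.
have := mul_bin_diag (n - i.+1) i.
have -> : ((n - i.+1).-1 = n - i.+2)%N by lia.
nia.
Qed.

Lemma horner_dickson3 (R : comNzRingType) (c : R) m :
  (dickson3 m.+2 1).[c] = dickson_e (- c) m.+2 - 2 * (- c) * dickson_e (- c) m.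
Proof.
rewrite /dickson3 horner_sum.
under eq_bigr do rewrite hornerZ horner_exp hornerN hornerX expr1n mulr1.
rewrite -(big_mkord xpredT (fun i => (dickson3_coef m.+2 i)%:~R * (- c) ^+ i)).
set t := - c.
rewrite -(@dickson_e_sum _ t m.+2 m./2.+2) // -(@dickson_e_sum _ t m m./2.+1) //.
rewrite (big_nat_recl m./2.+1) // (big_nat_recl m./2.+1) //.
rewrite dickson3_coef0 // subn0 bin0 rmorph1.
rewrite -addrA mulr_sumr -sumrB; congr (_ + _); apply: eq_big_nat => i /andP[_ le_im].
rewrite dickson3_coefS; last by rewrite -geq_half_double.
by rewrite !subSS rmorphB rmorphM /= -!pmulrn !exprS; ring.
Qed.

Lemma horner_dickson3_one (R : comNzRingType) (c : R) : (dickson3 1 (1 : R)).[c] = 1.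
Proof.
rewrite /dickson3 horner_sum big_ord1 hornerZ expr0 hornerC dickson3_coef0 //.
by rewrite rmorph1 expr1n !mulr1.
Qed.

Lemma horner_dickson3_at0 (R : comNzRingType) m : (dickson3 m.+2 (1 : R)).[0] = 1.
Proof. by rewrite horner_dickson3 oppr0 !dickson_e_at0 mulr0 mul0r subr0. Qed.

Lemma horner_dickson3_atN2 (R : idomainType) m : (3 : R) != 0 ->
  (dickson3 m.+2 (1 : R)).[-2] = - (-1) ^+ m.
Proof.
move=> three_neq0; apply: (mulfI three_neq0).
rewrite horner_dickson3 opprK.
transitivity (3 * dickson_e 2 m.+2 - 4 * (3 * dickson_e (2 : R) m)); first ring.
by rewrite !dickson_e_at2 !exprS; ring.
Qed.

Lemma horner_dickson3_at1 (R : comNzRingType) m : (m %% 6 == 2)%N || (m %% 6 == 4)%N ->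
  (dickson3 m.+2 (1 : R)).[1] = -1.
Proof.
rewrite horner_dickson3 (dickson_e_atN1_mod6 _ m.+2) (dickson_e_atN1_mod6 _ m).
have -> : (m.+2 %% 6 = (m %% 6).+2 %% 6)%N by lia.
case/orP=> /eqP ->; rewrite !dickson_eSS dickson_e1 dickson_e0; ring.
Qed.

Theorem theorem3p1 (F : finFieldType) (p e n : nat) :
  prime p -> (3 < p)%N -> p \in [pchar F] -> (1 <= e)%N -> #|F| = (p ^ e)%N ->
  (1 <= n)%N ->
  is_perm_poly (dickson3 n (1 : F)) ->
  n = 2 %[mod 6].
Proof.
move=> _ p_gt3 pF _ _ n_gt0 /bij_inj Dinj.
have natr_neq0 k : (0 < k < p)%N -> k%:R != 0 :> F.
  by case/andP=> k_gt0 lt_kp; rewrite -(dvdn_pcharf pF) gtnNdvd.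
have two_neq0 : (2 : F) != 0 by apply: natr_neq0; lia.
have three_neq0 : (3 : F) != 0 by apply: natr_neq0; lia.
case: n n_gt0 Dinj => [//|[_ Dinj|m _ Dinj]].
  have /Dinj/eqP : (dickson3 1 1).[0 : F] = (dickson3 1 1).[-2].
    by rewrite !horner_dickson3_one.
  by rewrite eq_sym oppr_eq0 (negbTE two_neq0).
have DN2 := horner_dickson3_atN2 m three_neq0.
case/boolP: (odd m) => [m_odd|m_even].
  have /Dinj/eqP : (dickson3 m.+2 1).[-2] = (dickson3 m.+2 1).[0 : F].
    by rewrite DN2 horner_dickson3_at0 -signr_odd m_odd expr1 opprK.
  by rewrite oppr_eq0 (negbTE two_neq0).
have m2 : (m %% 2 = 0)%N by rewrite modn2 (negbTE m_even).
have [/eqP m6|m6] := boolP (m %% 6 == 0)%N; first by lia.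
have m6_24 : (m %% 6 == 2)%N || (m %% 6 == 4)%N by lia.
have /Dinj/eqP : (dickson3 m.+2 1).[1 : F] = (dickson3 m.+2 1).[-2].
  by rewrite DN2 horner_dickson3_at1 // -signr_odd (negbTE m_even) expr0.
by rewrite -subr_eq0 opprK -natr1 (negbTE three_neq0).
Qed.
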